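(* Let $G(T)$ be the graph inverse semigroup of the unary tree $T$, endowed with a Hausdorff topology making it a semitopological semigroup. If there exists $k\in\omega$ such that $0$ is not an accumulation point of the set $L_k^*$, then $0$ is not an accumulation point of $L_n^*$ for every $n\in\omega$.
   Context: A semitopological semigroup is a space with separately continuous associative multiplication. The unary tree $T$ has vertex set $\omega$ and edges $(n,n+1)$ with source $n$ and range $n+1$. For $k\le p$, $(k,p)$ denotes the unique path from vertex $k$ to vertex $p$ (with $(n,n)$ the vertex $n$). The graph inverse semigroup $G(T)$ is the semigroup with zero $0$ generated by the vertices, the edges and formal inverses $e^{-1}$ of the edges subject to: for vertices $a,b$: $ab=a$ if $a=b$, else $0$; for edges $e,f$: $s(e)e=er(e)=e$, $e^{-1}s(e)=r(e)e^{-1}=e^{-1}$, $e^{-1}f=r(e)$ if $e=f$, else $0$. Each non-zero element is uniquely $uv^{-1}$ with paths $u,v$ having the same range. For $n\in\omega$, $L_n=\{(n,m)(n,m)^{-1}\mid m\ge n\}\cup\{0\}$ and $L_n^*=L_n\setminus\{0\}$. *)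

From mathcomp Require Import all_boot.
Set Implicit Arguments. Unset Strict Implicit. Unset Printing Implicit Defensive.

(* Concrete model of the graph inverse semigroup G(T) of the unary tree T.
   A non-zero element (k,p)(l,p)^{-1} (paths from k to p and from l to p,
   k <= p, l <= p) is encoded by the triple (k, l, p). *)
Definition triple_ok (t : nat * nat * nat) : bool :=
  (t.1.1 <= t.2) && (t.1.2 <= t.2).

Definition nzT := {t : nat * nat * nat | triple_ok t}.

Definition GT := option nzT.

Definition gzero : GT := None.

(* the element (a,m)(b,m)^{-1}, or 0 if the triple is not valid *)
Definition gelt (a b m : nat) : GT := insub (a, b, m).

(* (a,m)(b,m)^{-1} * (c,m')(d,m')^{-1}
     = (a, max m m')(d, max m m')^{-1}  if b = c,  and 0 otherwise
   (computed from the defining relations of G(T)). *)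
Definition gmul (x y : GT) : GT :=
  match x, y with
  | Some s, Some t =>
      let: (a, b, m) := val s in
      let: (c, d, m') := val t in
      if b == c then gelt a d (maxn m m') else gzero
  | _, _ => gzero
  end.

Definition Lstar (n : nat) (x : GT) : Prop :=
  exists m, n <= m /\ x = gelt n n m.

Definition is_topology (op : (GT -> Prop) -> Prop) : Prop :=
  op (fun _ => True) /\
  (forall F : (GT -> Prop) -> Prop,
      (forall U, F U -> op U) -> op (fun x => exists U, F U /\ U x)) /\
  (forall U V, op U -> op V -> op (fun x => U x /\ V x)).

Definition hausdorff (op : (GT -> Prop) -> Prop) : Prop :=
  forall x y : GT, x <> y ->
    exists U V, op U /\ op V /\ U x /\ V y /\ (forall z, ~ (U z /\ V z)).

Definition continuous_map (op : (GT -> Prop) -> Prop) (f : GT -> GT) : Prop :=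
  forall V, op V -> op (fun x => V (f x)).

Definition semitopological (op : (GT -> Prop) -> Prop) : Prop :=
  forall a : GT, continuous_map op (fun x => gmul a x) /\
                 continuous_map op (fun x => gmul x a).

Definition accumulation_point (op : (GT -> Prop) -> Prop) (x : GT)
    (A : GT -> Prop) : Prop :=
  forall U, op U -> U x -> exists y, y <> x /\ A y /\ U y.

(* The map x |-> (k,p)(n,p)^-1 x (n,p)(k,p)^-1 with p = max n k is
   continuous in a semitopological semigroup, fixes 0 and sends every
   element (n,m)(n,m)^-1 of L_n^* to the non-zero element (k,q)(k,q)^-1
   of L_k^*, where q = max p m.  A continuous map fixing 0 carries any
   accumulation of L_n^* at 0 to an accumulation of its image at 0, so if
   0 is an accumulation point of some L_n^* it is one of every L_k^*. *)
From mathcomp Require Import all_boot.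

Set Implicit Arguments.
Unset Strict Implicit.

Lemma gelt_neq0 a b m : a <= m -> b <= m -> gelt a b m <> gzero.
Proof.
move=> am bm; have ok : triple_ok (a, b, m) by rewrite /triple_ok /= am bm.
by rewrite /gelt (insubT _ ok).
Qed.

Lemma gmul_gelt a b m c d m' : a <= m -> b <= m -> c <= m' -> d <= m' ->
  gmul (gelt a b m) (gelt c d m') =
  if b == c then gelt a d (maxn m m') else gzero.
Proof.
move=> am bm cm dm.
have ok1 : triple_ok (a, b, m) by rewrite /triple_ok /= am bm.
have ok2 : triple_ok (c, d, m') by rewrite /triple_ok /= cm dm.
by rewrite /gelt (insubT _ ok1) (insubT _ ok2).
Qed.

Lemma gmulr0 x : gmul x gzero = gzero.
Proof. by case: x. Qed.

Lemma Lstar_gelt n m : n <= m -> Lstar n (gelt n n m).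
Proof. by move=> nm; exists m. Qed.

Lemma gmul_gelt_conj k n p m : k <= p -> n <= p -> n <= m ->
  gmul (gmul (gelt k n p) (gelt n n m)) (gelt n k p) = gelt k k (maxn p m).
Proof.
move=> kp np nm.
have le_pq : p <= maxn p m by rewrite leq_maxl.
rewrite gmul_gelt // eqxx gmul_gelt ?(leq_trans kp) ?(leq_trans np) // eqxx.
by rewrite maxnAC maxnn.
Qed.

Section Continuity.

Variable op : (GT -> Prop) -> Prop.

Lemma continuous_map_comp f g :
  continuous_map op f -> continuous_map op g -> continuous_map op (g \o f).
Proof. by move=> cf cg V /cg /cf. Qed.

Lemma continuous_gmul_conj a b : semitopological op ->
  continuous_map op (fun x => gmul (gmul a x) b).
Proof.
move=> semi; exact (continuous_map_comp (semi a).1 (semi b).2).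
Qed.

Lemma accumulation_point_image f x y A B :
  continuous_map op f -> f x = y ->
  (forall z, A z -> z <> x -> B (f z) /\ f z <> y) ->
  accumulation_point op x A -> accumulation_point op y B.
Proof.
move=> cf <- fAB accA U oU Ufx.
have [z [zx [Az Ufz]]] := accA _ (cf U oU) Ufx.
by have [Bfz fzfx] := fAB z Az zx; exists (f z).
Qed.

End Continuity.

Theorem lemma4p5 (op : (GT -> Prop) -> Prop)
  (Htop : is_topology op) (Hhaus : hausdorff op) (Hsemi : semitopological op) :
  (exists k : nat, ~ accumulation_point op gzero (Lstar k)) ->
  forall n : nat, ~ accumulation_point op gzero (Lstar n).
Proof.
move=> [k not_acc_k] n acc_n; apply: not_acc_k.
pose p := maxn n k.
have kp : k <= p by rewrite leq_maxr.
have np : n <= p by rewrite leq_maxl.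
have conj_cont := continuous_gmul_conj (gelt k n p) (gelt n k p) Hsemi.
apply: (accumulation_point_image conj_cont) acc_n; first by rewrite gmulr0.
move=> _ [m [nm ->]] _; rewrite gmul_gelt_conj //.
have pq : p <= maxn p m by rewrite leq_maxl.
split; first exact/Lstar_gelt/(leq_trans kp).
exact: gelt_neq0 (leq_trans kp pq) (leq_trans kp pq).
Qed.
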